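(* Let $n \geq 2k \geq 4$ and let $\mathcal F, \mathcal G \subset \binom{[n]}{k}$ be non-trivial, cross-intersecting, initial families. For $P \subset [k+1]$ with $2 \leq |P| \leq k$ let $\mathcal F(P) = \{F \setminus P : F \in \mathcal F,\ F \cap [k+1] = P\}$, $\mathcal G(P) = \{G \setminus P : G \in \mathcal G,\ G \cap [k+1] = P\}$, and $$\alpha(P) = \frac{|\mathcal F(P)|}{\binom{n-k-1}{k-|P|}},\qquad \beta(P) = \frac{|\mathcal G(P)|}{\binom{n-k-1}{k-|P|}}.$$ Then for any disjoint $P, Q \subset [k+1]$ with $2 \le |P|,|Q| \le k$, $$\alpha(P) + \beta(Q) \leq 1.$$
   Context: Families are cross-intersecting if every member of one meets every member of the other; a non-empty family is non-trivial if the intersection of all its members is empty. For $k$-sets $A=\{x_1<\dots<x_k\}$, $B=\{y_1<\dots<y_k\}$, $A\prec B$ means $x_i\le y_i$ for all $i$; a family is initial if $A\prec B\in\mathcal F$ implies $A\in\mathcal F$. *)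

From mathcomp Require Import all_boot all_order all_algebra.
Set Implicit Arguments. Unset Strict Implicit. Unset Printing Implicit Defensive.
Import Order.TTheory GRing.Theory Num.Theory.

(* Ground set [n] = {1,...,n} is modelled by 'I_n, element i <-> i+1
   (order preserving). So [k+1] is {x : 'I_n | x < k+1}. *)

Definition elt (n : nat) (A : {set 'I_n}) (i : nat) : nat :=
  nth 0 (sort leq [seq val x | x in A]) i.

Definition prec (n k : nat) (A B : {set 'I_n}) : Prop :=
  #|A| = k /\ #|B| = k /\ forall i, i < k -> elt A i <= elt B i.

Definition kfamily (n k : nat) (F : {set {set 'I_n}}) : Prop :=
  forall A, A \in F -> #|A| = k.

Definition initial (n k : nat) (F : {set {set 'I_n}}) : Prop :=
  forall A B, prec k A B -> B \in F -> A \in F.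

Definition cross_intersecting (n : nat) (F G : {set {set 'I_n}}) : Prop :=
  forall A B, A \in F -> B \in G -> A :&: B != set0.

Definition nontrivial (n : nat) (F : {set {set 'I_n}}) : Prop :=
  F != set0 /\ \bigcap_(A in F) A = set0.

Definition firstK1 (n k : nat) : {set 'I_n} := [set x : 'I_n | x < k.+1].

Definition restr (n k : nat) (F : {set {set 'I_n}}) (P : {set 'I_n}) : {set {set 'I_n}} :=
  [set A :\: P | A in [set A in F | A :&: firstK1 n k == P]].

Definition density (n k : nat) (F : {set {set 'I_n}}) (P : {set 'I_n}) : rat :=
  (#|restr k F P|%:R / ('C(n - k - 1, k - #|P|))%:R)%R.

From mathcomp Require Import all_boot all_order all_algebra.
From mathcomp Require Import ring zify.
Set Implicit Arguments. Unset Strict Implicit. Unset Printing Implicit Defensive.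
Import Order.TTheory GRing.Theory Num.Theory.

(* Let U be the complement of [k+1], m = |U| = n-k-1, a = k-|P|, b = k-|Q|
   and c = |Q|-1.  Then F(P) consists of a-subsets of U, G(Q) of b-subsets
   of U, and c <= a, b + c <= m.
   - Initiality: replacing the elements of a member A of F outside [k+1]
     by smaller elements keeps it in F (prec_shift_down).  Applied to
     ([k+1] \ Q) u Y with Y a c-subset of A \ P, and combined with
     cross-intersection, this shows that every member of G(Q) meets every
     c-subset of every member of F(P) (restr_meets).
   - Counting: with D the c-shadow of F(P) and H the b-subsets of U avoiding
     some member of D, two local LYM inequalities (double counting) give
     |F(P)|/C(m,a) <= |D|/C(m,c) <= |H|/C(m,b); as H and G(Q) are disjoint
     families of b-subsets of U, the densities of F(P) and G(Q) sum to at
     most 1 (cross_density_bound). *)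

Lemma sorted_nth_le (s : seq nat) i v : sorted leq s -> i < size s ->
  (nth 0 s i <= v) = (i < count (fun x => x <= v) s).
Proof.
elim: s i => [|x s IH] i //= hs hi.
have hs' : sorted leq s by apply: path_sorted hs.
have allx : all (leq x) s by apply: order_path_min hs; exact: leq_trans.
have c0 : v < x -> count (fun y => y <= v) s = 0.
  move=> vx; apply/eqP; rewrite eqn0Ngt -has_count; apply/hasPn => y ys.
  by rewrite -ltnNge (leq_trans vx) //; move/allP: allx; apply.
case: i hi => [|j] hi /=.
  by case xv: (x <= v) => //=; rewrite c0 // ltnNge xv.
rewrite IH //; case xv: (x <= v) => /=; first by rewrite add1n ltnS.
by rewrite c0 ?ltnNge ?xv.
Qed.

Lemma count_enum_card (T : finType) (A : {set T}) (p : pred T) :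
  count p (enum A) = #|[set z in A | p z]|.
Proof.
by rewrite -sum1_count big_enum_cond -sum1_card; apply: eq_bigl => z; rewrite inE.
Qed.

Definition count_le n (A : {set 'I_n}) (v : nat) : nat := #|[set z in A | val z <= v]|.

Lemma count_le_sorted n (A : {set 'I_n}) v :
  count (fun x => x <= v) (sort leq [seq val x | x in A]) = count_le A v.
Proof.
by rewrite (permP (permEl (perm_sort leq _))) count_map count_enum_card.
Qed.

Lemma size_sorted_elts n (A : {set 'I_n}) : size (sort leq [seq val x | x in A]) = #|A|.
Proof. by rewrite size_sort size_map -cardE. Qed.

Lemma count_le_split n (A : {set 'I_n}) v :
  count_le A v + #|[set z in A | v < val z]| = #|A|.
Proof.
rewrite -(cardsID [set z : 'I_n | val z <= v] A); congr (_ + _); apply: eq_card => z;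
  by rewrite !inE // ltnNge andbC.
Qed.

Lemma prec_of_count_le n k (A B : {set 'I_n}) : #|A| = k -> #|B| = k ->
  (forall v, count_le B v <= count_le A v) -> prec k A B.
Proof.
move=> cA cB hc; split=> //; split=> // i ik.
have sA := sort_sorted leq_total [seq val x | x in A].
have sB := sort_sorted leq_total [seq val x | x in B].
rewrite /elt sorted_nth_le ?size_sorted_elts ?cA // count_le_sorted.
by apply: leq_trans (hc _); rewrite -count_le_sorted -sorted_nth_le ?size_sorted_elts ?cB.
Qed.

Lemma prec_shift_down n k t (A B : {set 'I_n}) : #|A| = k -> #|B| = k ->
  {in B, forall z, val z < t -> z \in A} -> {in A, forall z, t <= val z -> z \in B} ->
  prec k A B.
Proof.
move=> cA cB lowB highA; apply: prec_of_count_le => // v.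
case: (ltnP v t) => [vt | tv].
  apply: subset_leq_card; apply/subsetP => z; rewrite !inE => /andP[zB zv].
  by rewrite zv lowB // (leq_ltn_trans zv vt).
have : #|[set z in A | v < val z]| <= #|[set z in B | v < val z]|.
  apply: subset_leq_card; apply/subsetP => z; rewrite !inE => /andP[zA vz].
  by rewrite vz highA // (leq_trans tv (ltnW vz)).
by have := count_le_split A v; have := count_le_split B v; lia.
Qed.

Lemma double_count (T T' : finType) (L : {set T}) (N : T -> {set T'}) p q :
  (forall x, x \in L -> #|N x| = p) ->
  (forall y, y \in \bigcup_(x in L) N x -> #|[set x in L | y \in N x]| <= q) ->
  #|L| * p <= #|\bigcup_(x in L) N x| * q.
Proof.
move=> hp hq; set S := \bigcup_(x in L) N x.
rewrite -sum_nat_const -[X in _ <= X]sum_nat_const.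
have -> : \sum_(x in L) p = \sum_(x in L) \sum_(y in S) (y \in N x : nat).
  apply: eq_bigr => x xL; rewrite -(hp x xL) -sum1_card [RHS]big_mkcond /=.
  rewrite big_mkcond /=; apply: eq_bigr => y _.
  by case: (boolP (y \in N x)) => [yN | _]; [rewrite ifT //; apply/bigcupP; exists x | case: ifP].
rewrite exchange_big /=; apply: leq_sum => y yS; apply: leq_trans (hq y yS).
rewrite -sum1_card big_mkcond [X in _ <= X]big_mkcond /=.
by apply: leq_sum => x _; rewrite inE; case: (x \in L); case: (y \in N x).
Qed.

Lemma leq_rescale x y p q r s : 0 < s -> p * q = r * s ->
  x * q <= y * s -> x * r <= y * p.
Proof.
move=> s_gt0 e hxy; rewrite -(leq_pmul2r s_gt0) -mulnA -e mulnCA.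
by rewrite mulnAC [y * s * p]mulnC leq_mul2l hxy orbT.
Qed.

(* Choosing an a-set and a c-subset of it, or first the c-set and then the
   remaining a-c elements. *)
Lemma bin_trinomial m a c : c <= a -> a <= m ->
  'C(m, a) * 'C(a, c) = 'C(m, c) * 'C(m - c, a - c).
Proof.
move=> ca am; have cm : c <= m by apply: leq_trans am.
have facts_gt0 : 0 < c`! * (a - c)`! * (m - a)`! by rewrite !muln_gt0 !fact_gt0.
apply/eqP; rewrite -(eqn_pmul2r facts_gt0); apply/eqP.
have e : m - c - (a - c) = m - a by lia.
have acmc : a - c <= m - c by lia.
have := bin_fact acmc; rewrite e => h.
transitivity ('C(m, a) * ('C(a, c) * (c`! * (a - c)`!) * (m - a)`!)); first ring.
rewrite bin_fact // bin_fact //.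
transitivity ('C(m, c) * (c`! * ('C(m - c, a - c) * ((a - c)`! * (m - a)`!)))); last ring.
by rewrite h bin_fact.
Qed.

(* Choosing disjoint c- and b-subsets in either order. *)
Lemma bin_swap m b c : b + c <= m ->
  'C(m, c) * 'C(m - c, b) = 'C(m, b) * 'C(m - b, c).
Proof.
move=> bcm.
have := @bin_trinomial m (b + c) c (leq_addl b c) bcm; rewrite addnK => <-.
have := @bin_trinomial m (b + c) b (leq_addr c b) bcm; rewrite addKn => <-.
by have := bin_sub (leq_addl b c); rewrite addnK => ->.
Qed.

Section Shadows.
Variable T : finType.
Implicit Types (U : {set T}) (L D : {set {set T}}).

Definition shadow (c : nat) L : {set {set T}} :=
  \bigcup_(X in L) [set Y : {set T} | Y \subset X & #|Y| == c].

Definition avoiders U (b : nat) D : {set {set T}} :=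
  \bigcup_(Y in D) [set W : {set T} | W \subset U :\: Y & #|W| == b].

Lemma mem_shadow c L (Y : {set T}) :
  Y \in shadow c L -> #|Y| = c /\ exists2 X, X \in L & Y \subset X.
Proof.
by case/bigcupP => X XL; rewrite inE => /andP[YX /eqP cY]; split=> //; exists X.
Qed.

Lemma mem_avoiders U b D (W : {set T}) : W \in avoiders U b D ->
  [/\ W \subset U, #|W| = b & exists2 Y, Y \in D & [disjoint W & Y]].
Proof.
case/bigcupP => Y YD; rewrite inE => /andP[WUY /eqP cW].
rewrite subsetD in WUY; case/andP: WUY => WU dWY.
by split=> //; exists Y.
Qed.

Lemma shadow_density U L a c : c <= a -> a <= #|U| ->
  (forall X, X \in L -> X \subset U /\ #|X| = a) ->
  #|L| * 'C(#|U|, c) <= #|shadow c L| * 'C(#|U|, a).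
Proof.
move=> ca aU hL.
apply: (leq_rescale (q := 'C(a, c)) (s := 'C(#|U| - c, a - c))).
- by rewrite bin_gt0 leq_sub2r.
- exact: bin_trinomial.
apply: double_count => [X /hL[_ cX] | Y YS]; first by rewrite cards_draws cX.
have [cY [X0 /hL[X0U _] YX0]] := mem_shadow YS.
have cUY : #|U :\: Y| = #|U| - c by rewrite cardsD (setIidPr (subset_trans YX0 X0U)) cY.
(* a member X of L above Y is determined by X \ Y, an (a-c)-subset of U \ Y *)
set S := [set X in L | _].
have inj : {in S &, injective (fun X => X :\: Y)}.
  move=> X1 X2; rewrite !inE => /andP[_ /andP[Y1 _]] /andP[_ /andP[Y2 _]] e.
  by rewrite -(setID X1 Y) -(setID X2 Y) (setIidPr Y1) (setIidPr Y2) e.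
rewrite -(card_in_imset inj) -cUY -cards_draws; apply: subset_leq_card.
apply/subsetP => Z /imsetP[X]; rewrite !inE => /andP[/hL[XU cX] /andP[YX _]] ->.
by rewrite setSD //= cardsD (setIidPr YX) cX cY.
Qed.

Lemma avoiders_density U D b c : b + c <= #|U| ->
  (forall Y, Y \in D -> Y \subset U /\ #|Y| = c) ->
  #|D| * 'C(#|U|, b) <= #|avoiders U b D| * 'C(#|U|, c).
Proof.
move=> bcU hD.
apply: (leq_rescale (q := 'C(#|U| - c, b)) (s := 'C(#|U| - b, c))).
- by rewrite bin_gt0; lia.
- exact: bin_swap.
apply: double_count => [Y /hD[YU cY] | W WH].
  by rewrite cards_draws cardsD (setIidPr YU) cY.
have [WU cW _] := mem_avoiders WH.
have cUW : #|U :\: W| = #|U| - b by rewrite cardsD (setIidPr WU) cW.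
rewrite -cUW -cards_draws; apply: subset_leq_card; apply/subsetP => Y.
rewrite !inE => /andP[/hD[YU ->] /andP[WUY _]]; rewrite eqxx andbT.
by move: WUY; rewrite !subsetD YU disjoint_sym => /andP[].
Qed.

End Shadows.

Lemma ler_ratio (R : numFieldType) x y p q : 0 < p -> 0 < q ->
  x * q <= y * p -> (x%:R / p%:R <= y%:R / q%:R :> R)%R.
Proof.
move=> p_gt0 q_gt0 h; rewrite ler_pdivrMr ?ltr0n // mulrAC ler_pdivlMr ?ltr0n //.
by rewrite -!natrM ler_nat.
Qed.

Lemma cross_density_bound (R : numFieldType) (T : finType) (U : {set T})
    (L M : {set {set T}}) a b c :
  c <= a -> a <= #|U| -> b + c <= #|U| ->
  (forall X, X \in L -> X \subset U /\ #|X| = a) ->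
  (forall W, W \in M -> W \subset U /\ #|W| = b) ->
  (forall X (Y : {set T}) W, X \in L -> Y \subset X -> #|Y| = c -> W \in M -> Y :&: W != set0) ->
  (#|L|%:R / 'C(#|U|, a)%:R + #|M|%:R / 'C(#|U|, b)%:R <= 1 :> R)%R.
Proof.
move=> ca aU bcU hL hM meet.
set D := shadow c L; set H := avoiders U b D.
have hD Y : Y \in D -> Y \subset U /\ #|Y| = c.
  by case/mem_shadow => cY [X /hL[XU _] YX]; split=> //; exact: subset_trans YX XU.
have Ca_gt0 : 0 < 'C(#|U|, a) by rewrite bin_gt0.
have Cb_gt0 : 0 < 'C(#|U|, b) by rewrite bin_gt0; lia.
have Cc_gt0 : 0 < 'C(#|U|, c) by rewrite bin_gt0; lia.
have LD := ler_ratio R Ca_gt0 Cc_gt0 (shadow_density ca aU hL).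
have DH := ler_ratio R Cc_gt0 Cb_gt0 (avoiders_density bcU hD).
have dMH : [disjoint M & H].
  rewrite -setI_eq0; apply/eqP/setP => W; rewrite !inE.
  apply/negP => /andP[WM /mem_avoiders[_ _ [Y YD dWY]]].
  have [cY [X XL YX]] := mem_shadow YD.
  by move: (meet X Y W XL YX cY WM); rewrite setI_eq0 disjoint_sym dWY.
have MH : #|M| + #|H| <= 'C(#|U|, b).
  have cMH : #|M :|: H| = #|M| + #|H| by apply/eqP; rewrite (leq_card_setU M H).2.
  rewrite -cMH -cards_draws.
  apply: subset_leq_card; apply/subsetP => W.
  by rewrite inE => /orP[/hM[WU cW] | /mem_avoiders[WU cW _]]; rewrite inE WU cW eqxx.
apply: (le_trans (lerD (le_trans LD DH) (lexx _))).
by rewrite -mulrDl -natrD ler_pdivrMr ?ltr0n // mul1r ler_nat addnC.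
Qed.

Lemma card_firstK1 n k : k < n -> #|firstK1 n k| = k.+1.
Proof.
move=> kn; have -> : firstK1 n k = [set widen_ord kn i | i : 'I_k.+1].
  apply/setP => x; rewrite inE; apply/idP/imsetP => [xk | [i _ ->]] /=.
    by exists (Ordinal xk) => //; apply: val_inj.
  exact: ltn_ord.
by rewrite card_imset ?card_ord //; move=> i j /(congr1 val) /= /val_inj.
Qed.

Lemma mem_restr n k (F : {set {set 'I_n}}) P X : X \in restr k F P ->
  exists A, [/\ A \in F, A :&: firstK1 n k = P & X = A :\: P].
Proof. by case/imsetP => A; rewrite inE => /andP[AF /eqP AK] ->; exists A. Qed.

Lemma restr_props n k (F : {set {set 'I_n}}) P X : kfamily k F ->
  X \in restr k F P -> X \subset ~: firstK1 n k /\ #|X| = k - #|P|.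
Proof.
move=> kF /mem_restr [A [AF AK ->]]; split.
  by apply/subsetP => z; rewrite -AK !inE; case: (z \in A); rewrite ?andbT ?andbF.
by rewrite cardsD -AK setIA setIid kF.
Qed.

(* Indeed ([k+1] \ Q) u Y is a k-set preceding A, hence lies in F, and it can
   only meet the corresponding member of G inside Y. *)
Lemma restr_meets n k (F G : {set {set 'I_n}}) (P Q X Y W : {set 'I_n}) :
  k < n -> kfamily k F -> cross_intersecting F G -> initial k F ->
  Q \subset firstK1 n k -> [disjoint P & Q] -> 0 < #|Q| ->
  X \in restr k F P -> W \in restr k G Q -> Y \subset X -> #|Y| = #|Q|.-1 ->
  Y :&: W != set0.
Proof.
move=> kn kF cFG iF QK dPQ Q_gt0 XF WG YX cY.
have [XU _] := restr_props kF XF.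
case/mem_restr: XF => A [AF AK EX]; case/mem_restr: WG => B [BG BK ->].
set K := firstK1 n k in AK BK QK XU.
have YU : Y \subset ~: K := subset_trans YX XU.
have YA : Y \subset A by rewrite (subset_trans YX) // EX subsetDl.
set A' := (K :\: Q) :|: Y.
have cA' : #|A'| = k.
  have dY : [disjoint K :\: Q & Y].
    by rewrite disjoint_sym disjoints_subset (subset_trans YU) // setCS subsetDl.
  have -> : #|A'| = #|K :\: Q| + #|Y| by apply/eqP; rewrite (leq_card_setU _ _).2.
  have := subset_leq_card QK.
  by rewrite cardsD (setIidPr QK) card_firstK1 // cY; lia.
have A'F : A' \in F.
  apply: (iF _ _ _ AF); apply: (prec_shift_down (t := k.+1)) => //; first exact: kF.
    move=> z zA zk; have zP : z \in P by rewrite -AK inE zA inE.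
    by rewrite !inE (disjointFr dPQ zP) zk.
  move=> z; rewrite !inE => /orP[/andP[_ zk] kz | zY _]; last exact: subsetP YA z zY.
  by rewrite ltnNge kz in zk.
have /set0Pn[z /setIP[zA' zB]] := cFG _ _ A'F BG.
have zY : z \in Y.
  by case/setUP: zA' => // /setDP[zK zQ]; rewrite -BK inE zB zK in zQ.
have zK : z \notin K by move: (subsetP YU z zY); rewrite inE.
apply/set0Pn; exists z; apply/setIP; split=> //; apply/setDP; split=> //.
by apply: contra zK; apply: (subsetP QK).
Qed.

Theorem claim3p1 (n k : nat) (F G : {set {set 'I_n}}) :
  (4 <= 2 * k)%N -> (2 * k <= n)%N ->
  kfamily k F -> kfamily k G ->
  nontrivial F -> nontrivial G ->
  cross_intersecting F G ->
  initial k F -> initial k G ->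
  forall P Q : {set 'I_n},
    P \subset firstK1 n k -> Q \subset firstK1 n k ->
    [disjoint P & Q] ->
    (2 <= #|P| <= k)%N -> (2 <= #|Q| <= k)%N ->
    (density k F P + density k G Q <= 1)%R.
Proof.
move=> hk hn kF kG _ _ cFG iF _ P Q PK QK dPQ /andP[P2 Pk] /andP[Q2 Qk].
have kn : k < n by lia.
have cU : #|~: firstK1 n k| = n - k - 1.
  by have := cardsC (firstK1 n k); rewrite card_firstK1 // card_ord; lia.
have cPQ : #|P| + #|Q| <= k.+1.
  have <- : #|P :|: Q| = #|P| + #|Q| by apply/eqP; rewrite (leq_card_setU _ _).2.
  by rewrite -(card_firstK1 kn) subset_leq_card // subUset PK QK.
(* U = ~: [k+1], a = k - |P|, b = k - |Q|, c = |Q| - 1; the side conditions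
   c <= a <= |U| and b + c <= |U| follow from |P| + |Q| <= k + 1 <= n - k. *)
rewrite /density -cU; apply: (@cross_density_bound _ _ _ _ _ _ _ #|Q|.-1).
- lia.
- lia.
- lia.
- by move=> X; apply: restr_props.
- by move=> W; apply: restr_props.
- move=> X Y W XF YX cY WG.
  by apply: (restr_meets kn kF cFG iF QK dPQ _ XF WG YX cY); lia.
Qed.
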